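(* Let $u$ and $v$ be two prime words such that $u<_{lex}v$. Then $v=u^\alpha xy$ for some ordinal $\alpha$ and words $x,y$ such that $|x|\le|u|$ and $u<_{str}x$.
   Context: $A$ is a finite alphabet with a linear order $<_A$. Words are sequences of letters indexed by countable ordinals, $|x|$ is the length, $x^\alpha$ the concatenation of $\alpha$ copies of $x$. A suffix of $x$ is $x[\gamma,|x|)$, proper if $0<\gamma<|x|$. Write $x<_{str}x'$ if there are letters $a<_Ab$ and words $y,z,z'$ with $x=yaz$, $x'=ybz'$; $x\le_{lex}x'$ iff $x$ is a prefix of $x'$ or $x<_{str}x'$; $<_{lex}$ is its strict version. A word is primitive if $x=y^\alpha$ implies $\alpha=1$ and $y=x$; $w$ is prime if it is primitive and every proper suffix $z$ satisfies $w\le_{lex}z$. *)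

From HB Require Import structures.
From mathcomp Require Import all_boot all_order.
Set Implicit Arguments. Unset Strict Implicit. Unset Printing Implicit Defensive.
Import Order.TTheory.
Local Open Scope order_scope.

(* Validity (countable well-order) is a separate
   predicate.  Words are compared up to isomorphism ([weq]). *)
Record word (A : Type) := Word {
  pos : Type;
  wlt : pos -> pos -> Prop;
  lab : pos -> A }.

(* Countable ordinals, presented as countable well-ordered types. *)
Record cordinal := COrdinal {
  opos : Type;
  olt : opos -> opos -> Prop }.

Definition is_cwo (T : Type) (lt : T -> T -> Prop) : Prop :=
  (forall a, ~ lt a a) /\
  (forall a b c, lt a b -> lt b c -> lt a c) /\
  (forall a b, lt a b \/ a = b \/ lt b a) /\
  well_founded lt /\
  (exists f : T -> nat, injective f).

Definition valid_word A (w : word A) : Prop := is_cwo (@wlt A w).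
Definition valid_ord (al : cordinal) : Prop := is_cwo (@olt al).

Section Ops.
Variable A : Type.

Definition weq (x y : word A) : Prop :=
  exists f : pos x -> pos y, bijective f /\
    (forall a b, wlt a b <-> wlt (f a) (f b)) /\
    (forall a, lab (f a) = lab a).

Definition letter (a : A) : word A := @Word A unit (fun _ _ => False) (fun _ => a).

Definition concat (x y : word A) : word A :=
  @Word A (pos x + pos y)%type
    (fun p q => match p, q with
                | inl a, inl b => wlt a b
                | inr a, inr b => wlt a b
                | inl _, inr _ => True
                | inr _, inl _ => False end)
    (fun p => match p with inl a => lab a | inr b => lab b end).

(* x^alpha : concatenation of alpha copies of x (positions alpha x |x|,
   ordered lexicographically with the alpha-coordinate first) *)
Definition pow (x : word A) (al : cordinal) : word A :=
  @Word A (opos al * pos x)%type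
    (fun p q => olt p.1 q.1 \/ (p.1 = q.1 /\ wlt p.2 q.2))
    (fun p => lab p.2).

Definition suffix (x : word A) (g : pos x) : word A :=
  @Word A {q : pos x | ~ wlt q g}
    (fun p q => wlt (sval p) (sval q)) (fun p => lab (sval p)).

(* |x| <= |u| : x's positions embed as an initial segment of u's *)
Definition len_le (x u : word A) : Prop :=
  exists f : pos x -> pos u,
    (forall a b, wlt a b <-> wlt (f a) (f b)) /\
    (forall a c, wlt c (f a) -> exists b, f b = c).

Definition is_prefix (x x' : word A) : Prop :=
  exists z : word A, valid_word z /\ weq x' (concat x z).

Definition is_one (al : cordinal) : Prop := exists i : opos al, forall j, j = i.

Definition primitive (x : word A) : Prop :=
  forall (y : word A) (al : cordinal), valid_word y -> valid_ord al ->
    weq x (pow y al) -> is_one al /\ weq y x.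
End Ops.

Section Lex.
Variables (d : Order.disp_t) (A : finOrderType d).

Definition lt_str (x x' : word A) : Prop :=
  exists (y z z' : word A) (a b : A), a < b /\
    valid_word y /\ valid_word z /\ valid_word z' /\
    weq x (concat y (concat (letter a) z)) /\
    weq x' (concat y (concat (letter b) z')).

Definition le_lex (x x' : word A) : Prop := is_prefix x x' \/ lt_str x x'.
Definition lt_lex (x x' : word A) : Prop := le_lex x x' /\ ~ weq x x'.

(* prime: primitive and lexicographically <= every proper suffix;
   a proper suffix x[gamma,|x|) has 0 < gamma < |x|, i.e. gamma is a
   position of x which is not the least one *)
Definition prime_word (w : word A) : Prop :=
  valid_word w /\ primitive w /\
  forall g : pos w, (exists q, wlt q g) -> le_lex w (suffix g).
End Lex.

From Stdlib Require Import ClassicalEpsilon FunctionalExtensionality ProofIrrelevance Wellfounded.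
From mathcomp Require Import all_boot all_order.

(* If u <_str v, say u = y a z and v = y b z' with a < b, then x := y b works with
   alpha = 0.  Otherwise u is a proper prefix of v, and we cut v greedily into
   consecutive blocks equal to u, by well-founded recursion on the positions of v.
   If the blocks exhaust v, then v = u^alpha, contradicting the primitivity of v.
   Otherwise v = u^alpha v[m,|v|), where u does not occur at the first uncovered
   position m, and v <=_lex v[m,|v|) since v is prime.  As u is a prefix of v but
   not of v[m,|v|), the first difference y a / y b of these two words lies inside
   the prefix u of v: u = y a z'' and v[m,|v|) = y b z', so again x := y b. *)

Set Implicit Arguments. Unset Strict Implicit. Unset Printing Implicit Defensive.

Section Orders.
Variables (T : Type) (lt : T -> T -> Prop).
Hypothesis lt_cwo : is_cwo lt.

Lemma cwo_irr a : ~ lt a a.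
Proof. by case: lt_cwo. Qed.

Lemma cwo_trans a b c : lt a b -> lt b c -> lt a c.
Proof. by case: lt_cwo => _ [+ _]; apply. Qed.

Lemma cwo_total a b : lt a b \/ a = b \/ lt b a.
Proof. by case: lt_cwo => _ [_ [+ _]]; apply. Qed.

Lemma cwo_wf : well_founded lt.
Proof. by case: lt_cwo => _ [_ [_ []]]. Qed.

Lemma cwo_min (P : T -> Prop) x : P x -> exists2 m, P m & forall y, lt y m -> ~ P y.
Proof.
move=> Px; apply: NNPP => no_min; elim: (cwo_wf x) Px => {}x _ IHx Px.
by apply: no_min; exists x => // y /IHx.
Qed.

Lemma cwo_sig (Q : T -> Prop) : is_cwo (fun a b : sig Q => lt (sval a) (sval b)).
Proof.
have val_inj : injective (@proj1_sig T Q).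
  by apply: eq_sig_hprop => ? ? ?; apply: proof_irrelevance.
case: lt_cwo => irr [trans [total [wf [f f_inj]]]].
split; [|split; [|split; [|split]]].
- by move=> a; apply: irr.
- by move=> a b c; apply: trans.
- move=> a b; case: (total (sval a) (sval b)) => [|[/val_inj|]]; tauto.
- exact: wf_inverse_image.
- by exists (f \o sval) => a b /f_inj /val_inj.
Qed.

End Orders.

Lemma inj_surj_bij (X Y : Type) (f : X -> Y) :
  injective f -> (forall y, exists x, f x = y) -> bijective f.
Proof.
move=> f_inj /choice[g fK]; exists g => // x.
by apply: f_inj; rewrite fK.
Qed.

Lemma mono_inj (X Y : Type) (ltX : X -> X -> Prop) (ltY : Y -> Y -> Prop) (f : X -> Y) :
  (forall a b, ltX a b <-> ltY (f a) (f b)) ->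
  (forall a b, ltX a b \/ a = b \/ ltX b a) -> (forall a, ~ ltX a a) -> injective f.
Proof.
move=> f_mono total irr a b fab.
by case: (total a b) => [|[//|]] /f_mono; rewrite fab => /f_mono /irr.
Qed.

Section Words.
Variable A : Type.
Implicit Types x y z : word A.

Lemma weq_refl x : weq x x.
Proof. by exists id; split; [exists id|]. Qed.

Lemma weq_sym x y : weq x y -> weq y x.
Proof.
case=> f [[g fK gK] [f_mono f_lab]]; exists g; split; first by exists f.
split=> [a b|a]; first by rewrite f_mono !gK.
by rewrite -f_lab gK.
Qed.

Lemma weq_trans x y z : weq x y -> weq y z -> weq x z.
Proof.
case=> f [f_bij [f_mono f_lab]] [g [g_bij [g_mono g_lab]]].
exists (g \o f); split; first exact: bij_comp.
by split=> [a b|a] /=; rewrite ?f_mono ?g_mono ?g_lab.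
Qed.

Lemma weq_concat x x' y y' : weq x x' -> weq y y' -> weq (concat x y) (concat x' y').
Proof.
case=> f [[f' fK f'K] [f_mono f_lab]] [g [[g' gK g'K] [g_mono g_lab]]].
pose h p := match p with inl a => inl (f a) | inr b => inr (g b) end.
pose h' p := match p with inl a => inl (f' a) | inr b => inr (g' b) end.
exists (h : pos (concat x y) -> pos (concat x' y')); split.
  by exists (h' : pos (concat x' y') -> pos (concat x y)) => -[a|a];
    rewrite /= ?fK ?gK ?f'K ?g'K.
by split=> [[a|a] [b|b]|[a|a]] //=.
Qed.

Lemma weq_concatA x y z : weq (concat (concat x y) z) (concat x (concat y z)).
Proof.
pose f (p : pos (concat (concat x y) z)) : pos (concat x (concat y z)) :=
  match p with inl (inl a) => inl a | inl (inr b) => inr (inl b) | inr c => inr (inr c) end.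
pose g (p : pos (concat x (concat y z))) : pos (concat (concat x y) z) :=
  match p with inl a => inl (inl a) | inr (inl b) => inl (inr b) | inr (inr c) => inr c end.
exists f; split; first by exists g => [[[a|a]|a]|[a|[a|a]]].
by split=> [[[a|a]|a] [[b|b]|b]|[[a|a]|a]].
Qed.

Lemma weq_concat_empty_l x e : (pos e -> False) -> weq x (concat e x).
Proof.
move=> e0; exists inr; split; last by [].
exists (fun p => match p with inl b => match e0 b with end | inr a => a end) => //.
by case=> [b|]; first case: (e0 b).
Qed.

Lemma weq_concat_empty_r x e : (pos e -> False) -> weq x (concat x e).
Proof.
move=> e0; exists inl; split; last by [].
exists (fun p => match p with inl a => a | inr b => match e0 b with end end) => //.
by case=> [|b]; last case: (e0 b).
Qed.

Definition empty_word : word A := @Word A Empty_set (fun _ _ => False) (fun e => match e with end).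

Definition subword x (Q : pos x -> Prop) : word A :=
  @Word A (sig Q) (fun p q => wlt (sval p) (sval q)) (fun p => lab (sval p)).

Lemma valid_empty_word : valid_word empty_word.
Proof. by split; [|split; [|split; [|split]]]; try exists (fun _ => 0); case. Qed.

Lemma valid_letter (a : A) : valid_word (letter a).
Proof.
split; [|split; [|split; [|split]]].
- by move=> ? [].
- by move=> ? ? ? [].
- by do 2!case; right; left.
- by constructor=> ? [].
- by exists (fun _ => 0) => [[] []].
Qed.

Lemma valid_subword x (Q : pos x -> Prop) : valid_word x -> valid_word (subword Q).
Proof. move=> x_cwo; exact (cwo_sig x_cwo Q). Qed.

Lemma valid_concat x y : valid_word x -> valid_word y -> valid_word (concat x y).
Proof.
case=> irr [trans [total [wf [f f_inj]]]] [irr' [trans' [total' [wf' [g g_inj]]]]].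
split; [|split; [|split; [|split]]].
- by case=> a; [apply: irr | apply: irr'].
- by move=> [a|a] [b|b] [c|c] //=; [apply: trans | apply: trans'].
- move=> [a|a] [b|b] /=; [|by left|by right; right|].
  + by case: (total a b) => [|[->|]]; [left|right; left|right; right].
  + by case: (total' a b) => [|[->|]]; [left|right; left|right; right].
- have acc_inl a : Acc (@wlt A (concat x y)) (inl a).
    elim: (wf a) => {}a _ IH; constructor=> -[b|b] /= ba; [exact: IH | case: ba].
  move=> [a|a]; first exact: acc_inl.
  elim: (wf' a) => {}a _ IH; constructor=> -[b|b] /= ba; [exact: acc_inl | exact: IH].
- exists (fun p => pickle (match p with inl a => inl (f a) | inr b => inr (g b) end : nat + nat)).
  move=> [a|a] [b|b] /(pcan_inj pickleK) // [] => [/f_inj|/g_inj] -> //.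
Qed.

Lemma valid_suffix x (t : pos x) : valid_word x -> valid_word (suffix t).
Proof. exact: valid_subword. Qed.

Lemma valid_pow x (al : cordinal) : valid_word x -> valid_ord al -> valid_word (pow x al).
Proof.
case=> irr [trans [total [wf [f f_inj]]]] [irr' [trans' [total' [wf' [g g_inj]]]]].
split; [|split; [|split; [|split]]].
- by move=> [a i] /= [/irr'|[_ /irr]].
- move=> [a i] [b j] [c k] /= [ab|[<- ij]] [bc|[<- jk]]; first by left; apply: trans' bc.
  + by left.
  + by left.
  + by right; split; last apply: trans jk.
- move=> [a i] [b j] /=; case: (total' a b) => [|[<-|]]; try tauto.
  by case: (total i j) => [|[<-|]]; tauto.
- move=> [a i]; elim: (wf' a) i => {}a _ IHa i; elim: (wf i) => {}i _ IHi.
  by constructor=> -[b j] /= [ba|[-> ji]]; [exact: IHa | exact: IHi].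
- exists (fun p => pickle (g p.1, f p.2)).
  by move=> [a i] [b j] /(pcan_inj pickleK) [/g_inj -> /f_inj ->].
Qed.

Lemma weq_of_embedding x y (f : pos x -> pos y) : valid_word x ->
  (forall a b, wlt a b <-> wlt (f a) (f b)) -> (forall a, lab (f a) = lab a) ->
  (forall q, exists a, f a = q) -> weq x y.
Proof.
move=> x_valid f_mono f_lab f_surj; exists f; split=> //.
by apply: inj_surj_bij f_surj; apply: mono_inj f_mono (cwo_total x_valid) (cwo_irr x_valid).
Qed.

Lemma weq_concat_suffix x y (m : pos y) (f : pos x -> pos y) :
  valid_word x -> valid_word y ->
  (forall a b, wlt a b <-> wlt (f a) (f b)) -> (forall a, lab (f a) = lab a) ->
  (forall q, (exists a, f a = q) <-> wlt q m) -> weq (concat x (suffix m)) y.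
Proof.
move=> x_valid y_valid f_mono f_lab f_img.
have [trans total] := (cwo_trans y_valid, cwo_total y_valid).
have f_lt_m a : wlt (f a) m by apply/f_img; exists a.
pose g (p : pos (concat x (suffix m))) := match p with inl a => f a | inr q => sval q end.
apply: (@weq_of_embedding _ _ g).
- exact: valid_concat (valid_suffix _ y_valid).
- move=> [a|[q mq]] [b|[r mr]] //=; split=> //.
  + by case: (total r m) => [/mr []|[->|/(trans _ _ _ (f_lt_m a))]].
  + by move=> /trans /(_ (f_lt_m b)).
- by case.
- move=> q; case: (total q m) => [/f_img[a <-]|qm]; first by exists (inl a).
  have mq : ~ wlt q m.
    by case: qm => [-> | mq /(trans _ _ _ mq)]; apply: (cwo_irr y_valid).
  by exists (inr (exist _ q mq)).
Qed.

Lemma weq_split_at x (i : pos x) : valid_word x ->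
  weq x (concat (subword (fun j => wlt j i)) (concat (letter (lab i)) (subword (wlt i)))).
Proof.
move=> x_valid; have irr := cwo_irr x_valid; have trans := cwo_trans x_valid.
set xi := concat _ _.
pose f (p : pos xi) := match p with inl j => sval j | inr (inl _) => i | inr (inr j) => sval j end.
apply: weq_sym; apply: (@weq_of_embedding _ _ f).
- exact: valid_concat (valid_subword _ x_valid)
    (valid_concat (valid_letter _) (valid_subword _ x_valid)).
- move=> [[j ji]|[[]|[j ij]]] [[k ki]|[[]|[k ik]]] /=; split=> //.
  + by move=> _; apply: trans ji ik.
  + by move=> /trans /(_ ki) /irr.
  + by move=> /irr.
  + by move=> /trans /(_ ki) /(trans _ _ _ ij) /irr.
  + by move=> /(trans _ _ _ ij) /irr.
- by move=> [j|[[]|j]].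
- move=> p; case: (cwo_total x_valid p i) => [pi|[->|ip]]; first by exists (inl (exist _ p pi)).
  + by exists (inr (inl tt)).
  + by exists (inr (inr (exist _ p ip))).
Qed.

Lemma len_le_weq x y z : len_le x y -> weq y z -> len_le x z.
Proof.
case=> f [f_mono f_init] [g [[g' gK g'K] [g_mono _]]].
exists (g \o f); split=> [a b|a c] /=; first by rewrite f_mono g_mono.
rewrite -{1}(g'K c) -g_mono => /f_init[b fb].
by exists b; rewrite /= fb g'K.
Qed.

Lemma len_le_concat_letter y z (a b : A) :
  len_le (concat y (letter b)) (concat y (concat (letter a) z)).
Proof.
pose f (p : pos (concat y (letter b))) : pos (concat y (concat (letter a) z)) :=
  match p with inl q => inl q | inr _ => inr (inl tt) end.
exists f; split; first by move=> [q|[]] [r|[]].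
move=> [q|[]] [r|[[]|r]] //= _; first by exists (inl r).
by exists (inl r).
Qed.

Record prefix_embedding u x (g : pos u -> pos x) : Prop := PrefixEmbedding {
  pe_mono : forall i j, wlt i j <-> wlt (g i) (g j);
  pe_lab : forall i, lab (g i) = lab i;
  pe_down : forall p i, wlt p (g i) -> exists j, g j = p }.

Lemma prefix_embedding_comp u x y (g : pos u -> pos x) (h : pos x -> pos y) :
  prefix_embedding g -> prefix_embedding h -> prefix_embedding (h \o g).
Proof.
case=> g_mono g_lab g_down [h_mono h_lab h_down]; split=> [i j|i|p i] /=.
- by rewrite g_mono h_mono.
- by rewrite h_lab g_lab.
- move=> lt_p; have [q qp] := h_down _ _ lt_p.
  by move: lt_p; rewrite -qp => /h_mono /g_down[j <-]; exists j.
Qed.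

Lemma prefix_embedding_weq u x y (g : pos u -> pos x) :
  prefix_embedding g -> weq x y -> exists h : pos u -> pos y, prefix_embedding h.
Proof.
move=> g_pe [f [[f' fK f'K] [f_mono f_lab]]]; exists (f \o g).
apply: prefix_embedding_comp g_pe _; split=> // p a.
by rewrite -{1}(f'K p) -f_mono => _; exists (f' p).
Qed.

Lemma prefix_embedding_inl u x z (g : pos u -> pos x) :
  prefix_embedding g -> prefix_embedding (fun i => inl (g i) : pos (concat x z)).
Proof.
case=> g_mono g_lab g_down; split=> // -[p|p] i //= /g_down[j <-].
by exists j.
Qed.

Lemma prefix_embedding_of_prefix u x :
  is_prefix u x -> exists g : pos u -> pos x, prefix_embedding g.
Proof.
case=> z [_ /weq_sym x_uz]; apply: prefix_embedding_weq x_uz.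
by apply: (@prefix_embedding_inl _ _ _ id); split=> // p i _; exists p.
Qed.

Lemma prefix_embedding_inl_inv u x z (g : pos u -> pos (concat x z)) :
  prefix_embedding g -> (forall i, exists q, g i = inl q) ->
  exists h : pos u -> pos x, prefix_embedding h.
Proof.
case=> g_mono g_lab g_down /choice[h gE]; exists h.
split=> [i j|i|p i lt_p]; first by rewrite g_mono !gE.
  by rewrite -g_lab gE.
have /g_down : wlt (inl p : pos (concat x z)) (g i) by rewrite gE.
by case=> j; rewrite gE => -[<-]; exists j.
Qed.

Lemma weq_subword_before u y z (g : pos u -> pos (concat y z)) (i : pos u) (r : pos z) :
  valid_word u -> valid_word y -> prefix_embedding g -> g i = inr r ->
  (forall r', ~ wlt r' r) -> weq (subword (fun j => wlt j i)) y.
Proof.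
move=> u_valid y_valid [g_mono g_lab g_down] gi r_min.
have /choice[k kE] q : exists j, g j = inl q by apply: (g_down _ i); rewrite gi.
have k_lt q : wlt (k q) i by rewrite g_mono kE gi.
pose f q : pos (subword (fun j => wlt j i)) := exist _ (k q) (k_lt q).
apply: weq_sym; apply: (@weq_of_embedding _ _ f) => //.
- by move=> q q'; rewrite /= g_mono !kE.
- by move=> q; rewrite /= -g_lab kE.
move=> [j ji]; have := proj1 (g_mono j i) ji; rewrite gi.
case gj: (g j) => [q|r'] /= lt_gj; last by case: (r_min r').
exists q; apply: subset_eq_compat.
by apply: (mono_inj g_mono (cwo_total u_valid) (cwo_irr u_valid)); rewrite kE gj.
Qed.

Lemma prefix_past_letter u y z (a : A) (g : pos u -> pos (concat y (concat (letter a) z))) :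
  valid_word u -> valid_word y -> prefix_embedding g -> (exists i r, g i = inr r) ->
  exists2 z', valid_word z' & weq u (concat y (concat (letter a) z')).
Proof.
move=> u_valid y_valid g_pe [i [r gi]].
have [iq giq] : exists iq, g iq = inr (inl tt).
  case: r gi => [[]|r] gi; first by exists i.
  by apply: (pe_down g_pe (i := i)); rewrite gi.
exists (subword (wlt iq)); first exact: valid_subword.
have lab_iq : lab iq = a by rewrite -(pe_lab g_pe) giq.
rewrite -lab_iq.
apply: weq_trans (weq_split_at iq u_valid) (weq_concat _ (weq_refl _)).
apply: weq_subword_before u_valid y_valid g_pe giq _.
by case=> [[] []|r' []].
Qed.

Definition occurs_at u x (t : pos x) := exists e : pos u -> pos (suffix t), prefix_embedding e.

Lemma weq_suffix_min x (t : pos x) : valid_word x -> (forall q, ~ wlt q t) -> weq (suffix t) x.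
Proof.
move=> x_valid t_min; pose f (q : pos (suffix t)) : pos x := sval q.
apply: (@weq_of_embedding _ _ f (valid_suffix t x_valid)) => // q.
by exists (exist _ q (t_min q)).
Qed.

End Words.

Section Lex.
Variables (d : Order.disp_t) (A : finOrderType d).
Implicit Types u v x y z : word A.

Lemma lt_str_swap u y z (a b : A) : valid_word y -> valid_word z -> (a < b)%O ->
  weq u (concat y (concat (letter a) z)) ->
  len_le (concat y (letter b)) u /\ lt_str u (concat y (letter b)).
Proof.
move=> y_valid z_valid ab u_yaz; split.
  exact: len_le_weq (len_le_concat_letter _ _ _ _) (weq_sym u_yaz).
exists y, z, (empty_word A), a, b.
refine (conj ab (conj y_valid (conj z_valid (conj (valid_empty_word A) (conj u_yaz _))))).
apply: weq_concat (weq_refl _) (weq_concat_empty_r _ _).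
by case.
Qed.

Lemma suffix_factor u v (e : pos u -> pos v) (t : pos v) :
  valid_word u -> prefix_embedding e -> ~ occurs_at u t -> le_lex v (suffix t) ->
  exists x y, [/\ valid_word x, valid_word y, weq (suffix t) (concat x y), len_le x u
                & lt_str u x].
Proof.
move=> u_valid e_pe not_occ [/prefix_embedding_of_prefix[h h_pe] | ].
  by case: not_occ; exists (h \o e); apply: prefix_embedding_comp.
move=> [y [z [z' [a [b [ab [y_valid [_ [z'_valid [v_yaz t_ybz']]]]]]]]]].
have [g g_pe] := prefix_embedding_weq e_pe v_yaz.
have [g_past | g_within] := classic (exists i r, g i = inr r); last first.
  (* then u is a prefix of y, hence of suffix t = y b z' *)
  have g_inl i : exists q, g i = inl q.
    by case gi: (g i) => [q|r]; [exists q | case: g_within; exists i, r].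
  have [h h_pe] := prefix_embedding_inl_inv g_pe g_inl.
  case: not_occ; apply: prefix_embedding_weq (weq_sym t_ybz').
  exact: prefix_embedding_inl h_pe.
have [z'' z''_valid u_yaz''] := prefix_past_letter u_valid y_valid g_pe g_past.
have [len_x lt_x] := lt_str_swap y_valid z''_valid ab u_yaz''.
exists (concat y (letter b)), z'; split; [ | exact: z'_valid | | exact: len_x | exact: lt_x].
- exact: valid_concat y_valid (valid_letter b).
- exact: weq_trans t_ybz' (weq_sym (weq_concatA _ _ _)).
Qed.

End Lex.

Section Blocks.
Variables (A : Type) (u v : word A).
Hypotheses (u_valid : valid_word u) (v_valid : valid_word v).
Variable i0 : pos u.

Let v_irr := cwo_irr v_valid.
Let v_trans := cwo_trans v_valid.
Let v_total := cwo_total v_valid.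

(* junk unless [occurs_at u t] *)
Definition occurrence (t : pos v) : pos u -> pos (suffix t) :=
  epsilon (inhabits (fun _ => exist _ t (v_irr (a := t)))) (@prefix_embedding A u (suffix t)).

Definition window t i : pos v := sval (occurrence t i).

Definition in_window t p := exists i, window t i = p.

Lemma occurrenceP t : occurs_at u t -> prefix_embedding (occurrence t).
Proof. exact: epsilon_spec. Qed.

Lemma window_mono t : occurs_at u t -> forall i j, wlt i j <-> wlt (window t i) (window t j).
Proof. by move=> /occurrenceP t_pe i j; exact (pe_mono t_pe i j). Qed.

Lemma window_lab t i : occurs_at u t -> lab (window t i) = lab i.
Proof. by move=> /occurrenceP t_pe; exact (pe_lab t_pe i). Qed.

Lemma window_ge t i : ~ wlt (window t i) t.
Proof. exact (svalP (occurrence t i)). Qed.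

Lemma in_window_down t p q :
  occurs_at u t -> ~ wlt q t -> wlt q p -> in_window t p -> in_window t q.
Proof.
move=> /occurrenceP t_pe qt qp [i pi]; rewrite -pi in qp.
have [j tj] := pe_down t_pe (p := exist _ q qt) qp.
by exists j; rewrite /window tj.
Qed.

Lemma in_window_start t : occurs_at u t -> in_window t t.
Proof.
move=> t_occ; case: (v_total t (window t i0)) => [lt_t|[t_i0|/window_ge //]].
- by apply: in_window_down t_occ (v_irr (a := t)) lt_t _; exists i0.
- by exists i0.
Qed.

(* The greedy cutting of v into consecutive copies of u; [block_startE] unfolds it. *)
Definition block_step t (rec : forall s, wlt s t -> Prop) : Prop :=
  [/\ occurs_at u t,
      forall p, wlt p t -> exists s (st : wlt s t), rec s st /\ in_window s p
    & ~ exists s (st : wlt s t), rec s st /\ in_window s t].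

Definition block_start : pos v -> Prop := Fix (cwo_wf v_valid) (fun _ => Prop) block_step.

Lemma block_startE t : block_start t <->
  [/\ occurs_at u t,
      forall p, wlt p t -> exists s, [/\ wlt s t, block_start s & in_window s p]
    & ~ exists s, [/\ wlt s t, block_start s & in_window s t]].
Proof.
rewrite /block_start Fix_eq => [|s f g fg]; last first.
  by have -> : f = g by do 2!(apply: functional_extensionality_dep => ?); apply: fg.
split=> -[t_occ before not_in]; split=> //.
- by move=> p /before[s [st [bs ps]]]; exists s.
- by move=> [s [st bs ts]]; apply: not_in; exists s, st.
- by move=> p /before[s [st bs ps]]; exists s, st.
- by move=> [s [st [bs ts]]]; apply: not_in; exists s.
Qed.

Lemma block_start_occurs t : block_start t -> occurs_at u t.
Proof. by case/block_startE. Qed.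

Lemma in_window_lt s s' q :
  block_start s -> block_start s' -> wlt s s' -> in_window s q -> wlt q s'.
Proof.
move=> bs /block_startE[_ _ not_in] ss' sq.
have s'_in : ~ in_window s s' by move=> ss'_in; apply: not_in; exists s.
case: (v_total q s') => [//|[qs'|s'q]]; first by case: s'_in; rewrite -qs'.
case: s'_in; apply: in_window_down (block_start_occurs bs) _ s'q sq.
by move=> /(v_trans ss') /v_irr.
Qed.

Definition covered p := exists2 s, block_start s & in_window s p.

Lemma covered_down p q : covered p -> wlt q p -> covered q.
Proof.
move=> [s bs sp] qp; case: (v_total q s) => [qs|[->|sq]].
- by case/block_startE: (bs) => _ /(_ _ qs)[s' [_ bs' s'q]] _; exists s'.
- by exists s => //; apply/in_window_start/block_start_occurs.
- exists s => //; apply: in_window_down (block_start_occurs bs) _ qp sp.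
  by move=> /(v_trans sq) /v_irr.
Qed.

Definition block_ord : cordinal :=
  @COrdinal (sig block_start) (fun a b => wlt (sval a) (sval b)).

Lemma valid_block_ord : valid_ord block_ord.
Proof. exact: (cwo_sig v_valid block_start). Qed.

Definition block_map (p : pos (pow u block_ord)) : pos v := window (sval p.1) p.2.

Lemma block_map_mono p q : wlt p q <-> wlt (block_map p) (block_map q).
Proof.
case: p q => [[s bs] i] [[s' bs'] j]; rewrite /block_map /=.
have occ := block_start_occurs bs; have occ' := block_start_occurs bs'.
split=> [[ss'|[ss' ij]]|lt_ij].
- have lt_is' := in_window_lt bs bs' ss' (ex_intro _ i erefl).
  by case: (v_total s' (window s' j)) => [/(v_trans lt_is') //|[<- //|/window_ge]].
- by case: ss' => <-; apply/(window_mono occ).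
- case: (v_total s s') => [|[ss'|s's]]; first by left.
    subst s'; right; split; last exact/(window_mono occ).
    by congr exist; apply: proof_irrelevance.
  have lt_js := in_window_lt bs' bs s's (ex_intro _ j erefl).
  by case: (window_ge (v_trans lt_ij lt_js)).
Qed.

Lemma block_map_lab p : lab (block_map p) = lab p.
Proof. by case: p => [[s bs] i]; apply/window_lab/block_start_occurs. Qed.

Lemma block_map_img q : covered q <-> exists p, block_map p = q.
Proof.
split=> [[s bs [i <-]]|[[[s bs] i] <-]]; first by exists (exist _ s bs, i).
by exists s => //; exists i.
Qed.

Lemma weq_pow_blocks : (forall p, covered p) -> weq (pow u block_ord) v.
Proof.
move=> all_cov; apply: (@weq_of_embedding _ _ _ block_map).
- exact: valid_pow u_valid valid_block_ord.
- exact: block_map_mono.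
- exact: block_map_lab.
- by move=> q; apply/block_map_img.
Qed.

Lemma weq_pow_blocks_suffix m :
  (forall p, covered p <-> wlt p m) -> weq (concat (pow u block_ord) (suffix m)) v.
Proof.
move=> covE; apply: (@weq_concat_suffix _ _ _ _ block_map).
- exact: valid_pow u_valid valid_block_ord.
- exact: v_valid.
- exact: block_map_mono.
- exact: block_map_lab.
- by move=> q; rewrite -covE block_map_img.
Qed.

Lemma block_start_gap m :
  occurs_at u m -> (forall p, wlt p m -> covered p) -> ~ covered m -> block_start m.
Proof.
move=> m_occ cov_lt not_cov; apply/block_startE; split=> // [p pm|[s [_ bs sm]]].
  have [s bs sp] := cov_lt p pm; exists s; split=> //.
  case: (v_total s p) => [/v_trans/(_ pm) //|[-> //|]].
  by case: sp => i <- /window_ge.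
by apply: not_cov; exists s.
Qed.

Theorem greedy_pow_factorization (e : pos u -> pos v) : prefix_embedding e ->
  exists2 al : cordinal, valid_ord al &
    weq (pow u al) v \/
    exists m : pos v, [/\ exists q, wlt q m, ~ occurs_at u m
                      & weq (concat (pow u al) (suffix m)) v].
Proof.
move=> e_pe; exists block_ord; first exact: valid_block_ord.
have [all_cov|/not_all_ex_not[p not_cov_p]] := classic (forall p, covered p).
  by left; apply: weq_pow_blocks.
have [m not_cov_m m_min] := cwo_min v_valid (P := fun q => ~ covered q) not_cov_p.
have cov_lt q : wlt q m -> covered q by move=> qm; apply: NNPP; apply: m_min.
have covE q : covered q <-> wlt q m.
  split=> [cov_q|]; last exact: cov_lt.
  case: (v_total q m) => [//|[qm|mq]]; first by case: not_cov_m; rewrite -qm.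
  by case: not_cov_m; apply: covered_down cov_q mq.
have not_occ : ~ occurs_at u m.
  move=> m_occ; apply: (not_cov_m); exists m; last exact: in_window_start.
  exact: block_start_gap m_occ cov_lt not_cov_m.
have [p0 _ p0_min] := cwo_min v_valid (P := fun _ => True) (x := e i0) I.
have p0_occ : occurs_at u p0.
  apply: prefix_embedding_weq e_pe (weq_sym (weq_suffix_min v_valid _)).
  by move=> q /p0_min.
right; exists m; split; [ | exact: not_occ | exact: weq_pow_blocks_suffix covE].
exists p0; case: (v_total p0 m) => [//|[p0m|/p0_min //]].
by case: not_occ; rewrite -p0m.
Qed.

End Blocks.

Definition cord0 : cordinal := @COrdinal Empty_set (fun _ _ => False).

Definition cord2 : cordinal := @COrdinal bool (fun a b => a = false /\ b = true).

Lemma valid_cord0 : valid_ord cord0.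
Proof. by split; [|split; [|split; [|split]]]; try exists (fun _ => 0); case. Qed.

Lemma valid_cord2 : valid_ord cord2.
Proof.
split; [|split; [|split; [|split]]].
- by move=> a [->].
- by move=> a b c [_ ->] [].
- by do 2!case; rewrite /=; auto.
- have acc_false : Acc (@olt cord2) false by constructor=> ? [].
  by case; constructor=> ? [->].
- by exists nat_of_bool => -[] [].
Qed.

Lemma primitive_nonempty (A : Type) (u : word A) :
  valid_word u -> primitive u -> inhabited (pos u).
Proof.
move=> u_valid u_prim; apply: NNPP => u_empty.
have u0 (i : pos u) : False by apply: u_empty.
have u_u2 : weq u (pow u cord2).
  pose f (i : pos u) : pos (pow u cord2) := (false, i).
  apply: (@weq_of_embedding _ _ _ f u_valid).
  - by move=> a; exfalso; apply: u0 a.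
  - by move=> a; exfalso; apply: u0 a.
  - by move=> q; exfalso; apply: u0 q.2.
have [[[] two_one] _] := u_prim u cord2 u_valid valid_cord2 u_u2.
  by have := two_one false.
by have := two_one true.
Qed.

Section Factorization.
Variables (d : Order.disp_t) (A : finOrderType d).
Implicit Types u v : word A.

Definition pow_factorization u v : Prop :=
  exists (al : cordinal) (x y : word A),
    valid_ord al /\ valid_word x /\ valid_word y /\
    weq v (concat (pow u al) (concat x y)) /\
    len_le x u /\ lt_str u x.

Lemma pow_factorization_lt_str u v : lt_str u v -> pow_factorization u v.
Proof.
move=> [y [z [z' [a [b [ab [y_valid [z_valid [z'_valid [u_yaz v_ybz']]]]]]]]]].
have [len_x lt_x] := lt_str_swap y_valid z_valid ab u_yaz.
exists cord0, (concat y (letter b)), z'.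
have x_valid := valid_concat y_valid (valid_letter b).
refine (conj valid_cord0 (conj x_valid (conj z'_valid (conj _ (conj len_x lt_x))))).
apply: weq_trans v_ybz' (weq_trans (weq_sym (weq_concatA _ _ _)) _).
by apply: weq_concat_empty_l => -[[]].
Qed.

Lemma pow_factorization_prefix u v (i0 : pos u) :
  valid_word u -> prime_word v -> is_prefix u v -> ~ weq u v -> pow_factorization u v.
Proof.
move=> u_valid [v_valid [v_prim v_suf]] /prefix_embedding_of_prefix[e e_pe] u_ne_v.
have [al al_valid [v_pow|[m [m_proper not_occ v_split]]]] :=
  greedy_pow_factorization u_valid v_valid i0 e_pe.
  by case: u_ne_v; case: (v_prim u al u_valid al_valid (weq_sym v_pow)).
have [x [y [x_valid y_valid m_xy len_x lt_x]]] :=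
  suffix_factor u_valid e_pe not_occ (v_suf m m_proper).
exists al, x, y.
refine (conj al_valid (conj x_valid (conj y_valid (conj _ (conj len_x lt_x))))).
exact: weq_trans (weq_sym v_split) (weq_concat (weq_refl _) m_xy).
Qed.

End Factorization.

Theorem mainTheorem9 (d : Order.disp_t) (A : finOrderType d) (u v : word A) :
  prime_word u -> prime_word v -> lt_lex u v ->
  exists (al : cordinal) (x y : word A),
    valid_ord al /\ valid_word x /\ valid_word y /\
    weq v (concat (pow u al) (concat x y)) /\
    len_le x u /\ lt_str u x.
Proof.
move=> [u_valid [u_prim _]] v_prime [[u_pre|u_str] u_ne_v].
- have [i0] := primitive_nonempty u_valid u_prim.
  exact: pow_factorization_prefix i0 u_valid v_prime u_pre u_ne_v.
- exact: pow_factorization_lt_str.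
Qed.
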